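(* Let $(X,\leq)$ be a poset and $K$ a field, and let $\mathcal{U}_1=\{\alpha\in FI(X,K)\mid \alpha_{xx}=1\text{ for all }x\in X\}$. The following are equivalent: (1) $\mathcal{U}_1$ is solvable; (2) $\mathcal{U}_1$ is nilpotent; (3) $X$ is bounded. Moreover, in this case $\mathcal{U}_1$ has nilpotency class $l(X)$ and derived length $\lceil\log_2(l(X)+1)\rceil$.
   Context: $FI(X,K)$ is the finitary incidence algebra: the $K$-vector space of formal sums $\alpha=\sum_{x\leq y}\alpha_{xy}e_{xy}$ ($x,y\in X$, $\alpha_{xy}\in K$) such that for every pair $x<y$ only finitely many $x\leq u<v\leq y$ have $\alpha_{uv}\neq0$, with convolution product $\alpha\beta=\sum_{x\leq y}\big(\sum_{x\leq z\leq y}\alpha_{xz}\beta_{zy}\big)e_{xy}$ and identity $\delta=\sum_{x}e_{xx}$. $\mathcal{U}_1=\delta+J(FI(X,K))$ is a subgroup of the group of units. The length $l(X)$ is the supremum of $|C|-1$ over finite chains $C\subseteq X$; $X$ is bounded if $l(X)<\infty$. $\lceil t\rceil$ is the ceiling. *)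

From HB Require Import structures.
From mathcomp Require Import all_boot all_order all_algebra.
From mathcomp Require Import boolp classical_sets cardinality fsbigop.
Set Implicit Arguments. Unset Strict Implicit. Unset Printing Implicit Defensive.
Import Order.TTheory GRing.Theory.
Local Open Scope classical_set_scope.
Local Open Scope ring_scope.

(* An element sum_{x<=y} a_xy e_xy is represented by the function       *)
(* (x,y) |-> a_xy, required to vanish when not x <= y.                  *)
Section Incidence.
Variables (d : Order.disp_t) (X : porderType d) (K : fieldType).

Definition ialg := X -> X -> K.

Definition idelta : ialg := fun x y => if x == y then 1 else 0.

(* convolution product: (ab)_xy = sum_{x <= z <= y} a_xz b_zy
   (a finitely supported sum; it is a finite sum for a, b in FI) *)
Definition imul (a b : ialg) : ialg :=
  fun x y => \sum_(z \in [set z | (x <= z)%O /\ (z <= y)%O]) a x z * b z y.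

Definition finitary (a : ialg) : Prop :=
  forall x y : X, (x < y)%O ->
    finite_set [set uv : X * X | [/\ (x <= uv.1)%O, (uv.1 < uv.2)%O,
                                     (uv.2 <= y)%O & a uv.1 uv.2 != 0]].

Definition FI : set ialg :=
  [set a | (forall x y : X, ~~ (x <= y)%O -> a x y = 0) /\ finitary a].

Definition U1 : set ialg := [set a | FI a /\ forall x : X, a x x = 1].

Definition chain (s : seq X) : bool := sorted (fun a b => (a < b)%O) s.

Definition bounded : Prop := exists n : nat, forall s, chain s -> (size s <= n)%N.

(* l(X) = L : the supremum of |C| - 1 over finite chains C is L *)
Definition length_eq (L : nat) : Prop :=
  (exists s, chain s /\ size s = L.+1) /\ forall s, chain s -> (size s <= L.+1)%N.

End Incidence.

Section Grp.
Variables (T : Type) (mul : T -> T -> T) (e : T) (G : set T).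

(* H is a subgroup of G (inverses taken in G) *)
Definition is_subgroup (H : set T) : Prop :=
  [/\ H `<=` G, H e, (forall a b, H a -> H b -> H (mul a b))
    & (forall a b, H a -> G b -> mul a b = e -> H b)].

Definition gen (S : set T) : set T :=
  fun x => forall H, is_subgroup H -> S `<=` H -> H x.

(* set of commutators [a,b] = a^-1 b^-1 a b, a in A, b in B:
   c = [a,b] iff (b a) c = a b *)
Definition comm_set (A B : set T) : set T :=
  [set c | G c /\ exists a b, [/\ A a, B b & mul (mul b a) c = mul a b]].

Definition commg (A B : set T) : set T := gen (comm_set A B).

Fixpoint derived (n : nat) : set T :=
  if n is n'.+1 then commg (derived n') (derived n') else G.

(* lower central series: lcs n = gamma_{n+1}; lcs 0 = G,
   lcs (n+1) = [lcs n, G] *)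
Fixpoint lcs (n : nat) : set T :=
  if n is n'.+1 then commg (lcs n') G else G.

Definition grp_solvable : Prop := exists n, derived n = [set e].
Definition grp_nilpotent : Prop := exists n, lcs n = [set e].

Definition nil_class (c : nat) : Prop :=
  lcs c = [set e] /\ forall k, lcs k = [set e] -> (c <= k)%N.

Definition derived_length (n : nat) : Prop :=
  derived n = [set e] /\ forall k, derived k = [set e] -> (n <= k)%N.

End Grp.

From HB Require Import structures.
From mathcomp Require Import all_boot all_order all_algebra.
From mathcomp Require Import boolp classical_sets cardinality fsbigop.

(* Let U_m be the set of a in U_1 with a_xy = 0 whenever x <> y and [x, y]
   contains no chain of length m.  Each U_m is a subgroup, U_1 is the whole
   group, and the triangular shape of the product gives [U_i, U_j] <= U_(i+j)
   when X is bounded; hence gamma_(n+1) <= U_(n+1) and U1^(n) <= U_(2^n),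
   and both vanish as soon as the index exceeds l(X).  Conversely, for
   x < y < z the transvections t_xy = delta + e_xy satisfy [t_xy, t_yz] = t_xz,
   so along a chain x_0 < ... < x_m one finds t_(x_0 x_m) in gamma_(k+1) for
   k < m and in U1^(n) for 2^n <= m, which gives the matching lower bounds. *)

Set Implicit Arguments. Unset Strict Implicit. Unset Printing Implicit Defensive.
Import Order.TTheory GRing.Theory.
Local Open Scope classical_set_scope.
Local Open Scope ring_scope.

Section SubgroupSeries.
Variables (T : Type) (mul : T -> T -> T) (e : T) (G : set T).
Local Notation gen := (gen mul e G).
Local Notation comm_set := (comm_set mul G).
Local Notation lcs := (lcs mul e G).
Local Notation derived := (derived mul e G).

Lemma gen_sub (S H : set T) : is_subgroup mul e G H -> S `<=` H -> gen S `<=` H.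
Proof. by move=> subH SH x; apply. Qed.

Lemma sub_gen (S : set T) : S `<=` gen S.
Proof. by move=> x Sx H _ SH; apply: SH. Qed.

Lemma gen_e (S : set T) : gen S e.
Proof. by move=> H []. Qed.

Lemma genS (S S' : set T) : S `<=` S' -> gen S `<=` gen S'.
Proof. by move=> SS' x genx H subH S'H; apply: genx => // y /SS' /S'H. Qed.

Lemma comm_setS (A B A' B' : set T) :
  A `<=` A' -> B `<=` B' -> comm_set A B `<=` comm_set A' B'.
Proof.
by move=> AA' BB' c [Gc [a [b [Aa Bb abc]]]]; split=> //; exists a, b; split;
  [exact: AA' | exact: BB' |].
Qed.

Hypothesis G_group : is_subgroup mul e G G.

Lemma lcs_e n : lcs n e.
Proof. by case: n => [|n]; [case: G_group | exact: gen_e]. Qed.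

Lemma derived_e n : derived n e.
Proof. by case: n => [|n]; [case: G_group | exact: gen_e]. Qed.

Lemma lcs_sub n : lcs n `<=` G.
Proof. by case: n => [|n] //=; apply: gen_sub G_group _ => c []. Qed.

Lemma derived_sub_lcs n : derived n `<=` lcs n.
Proof.
elim: n => [|n IH] //=; apply: genS; apply: comm_setS => // x /IH; exact: lcs_sub.
Qed.

Lemma lcs_eq1 n : lcs n `<=` [set e] -> lcs n = [set e].
Proof. by move=> lcs1; apply/seteqP; split=> // _ ->; exact: lcs_e. Qed.

Lemma derived_eq1 n : derived n `<=` [set e] -> derived n = [set e].
Proof. by move=> der1; apply/seteqP; split=> // _ ->; exact: derived_e. Qed.

Lemma nilpotent_solvable : grp_nilpotent mul e G -> grp_solvable mul e G.
Proof.
by move=> [n lcs_n]; exists n; apply: derived_eq1; rewrite -lcs_n; exact: derived_sub_lcs.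
Qed.

End SubgroupSeries.

Section IncidenceAlgebra.
Variables (d : Order.disp_t) (X : porderType d) (K : fieldType).
Local Notation ialg := (ialg X K).
Local Notation imul := (@imul d X K).
Local Notation delta := (@idelta d X K).
Local Notation U1 := (@U1 d X K).

Definition le_supported (a : ialg) := forall p q : X, ~~ (p <= q)%O -> a p q = 0.

Lemma fsum_interval (F : X -> K) (p q : X) (r : seq X) : uniq r ->
  (forall z, z \in r -> (p <= z)%O /\ (z <= q)%O) ->
  (forall z, (p <= z)%O -> (z <= q)%O -> z \notin r -> F z = 0) ->
  \sum_(z \in [set z | (p <= z)%O /\ (z <= q)%O]) F z = \sum_(z <- r) F z.
Proof.
move=> r_uniq r_sub F0; rewrite (fsbigE r) //.
- rewrite big_seq_cond [RHS]big_seq; apply: eq_bigl => z.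
  by case: (boolP (z \in r)) => //= zr; rewrite mem_set //; apply: r_sub.
- by move=> z [pz zq]; apply: F0.
Qed.

Lemma imul_le_supported a b : le_supported (imul a b).
Proof.
move=> p q npq; rewrite /imul fsbig1 // => z [pz zq].
by move: npq; rewrite (le_trans pz zq).
Qed.

Lemma imul_diag (a b : ialg) p : imul a b p p = a p p * b p p.
Proof.
rewrite /imul (fsum_interval (r := [:: p])) ?big_seq1 //.
  by move=> z; rewrite inE => /eqP ->.
by move=> z pz zp; rewrite inE => /eqP []; apply/le_anti; rewrite pz zp.
Qed.

Lemma imul_lt (a b : ialg) p q : (p < q)%O ->
  (forall z, (p < z)%O -> (z < q)%O -> a p z * b z q = 0) ->
  imul a b p q = a p p * b p q + a p q * b q q.
Proof.
move=> pq mid0; rewrite /imul (fsum_interval (r := [:: p; q])).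
- by rewrite big_cons big_seq1.
- by rewrite /= inE andbT (lt_eqF pq).
- by move=> z; rewrite !inE => /orP[] /eqP ->; split; rewrite // ltW.
move=> z pz zq; rewrite !inE negb_or => /andP[zp zq'].
by apply: mid0; rewrite lt_neqAle ?pz ?zq // ?andbT // eq_sym.
Qed.

Lemma finitary_imul a b : finitary a -> finitary b -> finitary (imul a b).
Proof.
move=> fa fb x y xy.
set Sa := [set uv : X * X | [/\ (x <= uv.1)%O, (uv.1 < uv.2)%O, (uv.2 <= y)%O
                                & a uv.1 uv.2 != 0]].
set Sb := [set uv : X * X | [/\ (x <= uv.1)%O, (uv.1 < uv.2)%O, (uv.2 <= y)%O
                                & b uv.1 uv.2 != 0]].
apply: (sub_finite_set (B := Sa `|` Sb `|`
  [set (fun s t : X * X => (s.1, t.2)) s t | s in Sa & t in Sb])); last first.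
  by rewrite !finite_setU; split; [split; [exact: fa | exact: fb]
                                   | apply: finite_image2; [exact: fa | exact: fb]].
move=> [u v] /= [xu uv vy nz].
have [w [[uw wv] abw]] : exists w, ((u <= w)%O /\ (w <= v)%O) /\ a u w * b w v != 0.
  apply/not_existsP => all0; move/eqP: nz; apply; rewrite /imul fsbig1 // => w uwv.
  by apply/eqP/negbNE/negP => abw; apply: (all0 w).
have [aw bw] : a u w != 0 /\ b w v != 0.
  by split; apply: contraNneq abw => ->; rewrite ?mul0r ?mulr0.
have [wu|nwu] := eqVneq w u; first by left; right; split; rewrite // -wu.
have [wv'|nwv] := eqVneq w v; first by left; left; split; rewrite // -wv'.
right; exists (u, w); last exists (w, v) => //.
  by split=> //=; [rewrite lt_neqAle eq_sym nwu uw | exact: le_trans wv vy].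
by split=> //=; [exact: le_trans xu uw | rewrite lt_neqAle nwv wv].
Qed.

Lemma U1_le_supported a : U1 a -> le_supported a.
Proof. by case=> [[]]. Qed.

Lemma U1_delta : U1 delta.
Proof.
split; last by move=> x; rewrite /idelta eqxx.
split=> [x y nxy|x y _]; first by rewrite /idelta; case: eqP => // xy; rewrite xy lexx in nxy.
apply: sub_finite_set (finite_set0 _) => -[u v] /= [_ uv _].
by rewrite /idelta (lt_eqF uv) eqxx.
Qed.

Lemma U1_imul a b : U1 a -> U1 b -> U1 (imul a b).
Proof.
move=> [[_ fa] a1] [[_ fb] b1]; split; last by move=> x; rewrite imul_diag a1 b1 mulr1.
by split; [exact: imul_le_supported | exact: finitary_imul].
Qed.

Lemma U1_group : is_subgroup imul delta U1 U1.
Proof. by split=> //; [exact: U1_delta | exact: U1_imul]. Qed.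

Definition transvection (x y : X) : ialg :=
  fun p q => delta p q + (if (p == x) && (q == y) then 1 else 0).

Lemma U1_transvection x y : (x < y)%O -> U1 (transvection x y).
Proof.
move=> xy; split; last first.
  move=> p; rewrite /transvection /idelta eqxx.
  by have [->|_] := eqVneq p x; rewrite ?(lt_eqF xy) addr0.
split=> [p q npq|u v _].
  rewrite /transvection /idelta; have [pq|_] := eqVneq p q; first by rewrite pq lexx in npq.
  have [px|_] := eqVneq p x; have [qy|_] := eqVneq q y; rewrite //= ?addr0 //.
  by rewrite px qy (ltW xy) in npq.
apply: sub_finite_set (finite_set1 (x, y)) => -[p q] /= [_ pq _].
rewrite /transvection /idelta (lt_eqF pq) add0r.
by have [->|] := eqVneq p x; have [->|] := eqVneq q y; rewrite //= eqxx.
Qed.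

Lemma transvection_neq_delta x y : (x < y)%O -> transvection x y <> delta.
Proof.
move=> xy /(congr1 (fun f => f x y)); rewrite /transvection /idelta (lt_eqF xy) !eqxx /=.
by rewrite add0r => /eqP; rewrite oner_eq0.
Qed.

Lemma imul_transvection f x y : (x < y)%O -> le_supported f ->
  imul f (transvection x y) = fun p q => f p q + (if q == y then f p x else 0).
Proof.
move=> xy f0; apply/funext => p; apply/funext => q.
have [pq|npq] := boolP (p <= q)%O; last first.
  rewrite imul_le_supported // f0 // add0r; case: eqP => // qy; rewrite f0 //.
  by apply: contra npq => px; rewrite qy (le_trans px (ltW xy)).
have tqq : transvection x y q q = 1.
  rewrite /transvection /idelta eqxx.
  by have [->|_] := eqVneq q x; rewrite ?(lt_eqF xy) addr0.
have tzq z : z != q -> transvection x y z q = if (z == x) && (q == y) then 1 else 0.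
  by move=> zq; rewrite /transvection /idelta (negbTE zq) add0r.
have [/andP[/eqP qy px]|not_qy_px] := boolP ((q == y) && (p <= x)%O).
  have xq : x != q by rewrite qy (lt_eqF xy).
  rewrite /imul (fsum_interval (r := [:: q; x])).
  - by rewrite big_cons big_seq1 tqq tzq // !eqxx qy eqxx !mulr1.
  - by rewrite /= inE andbT eq_sym.
  - by move=> z; rewrite !inE => /orP[] /eqP ->; split; rewrite // qy ltW.
  move=> z pz zq; rewrite !inE negb_or => /andP[zq' zx].
  by rewrite tzq // (negbTE zx) mulr0.
rewrite /imul (fsum_interval (r := [:: q])) //.
- rewrite big_seq1 tqq mulr1; have [qy|] := eqVneq q y; last by rewrite addr0.
  by rewrite (f0 p x) ?addr0 //; move: not_qy_px; rewrite qy eqxx.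
- by move=> z; rewrite inE => /eqP ->.
move=> z pz zq; rewrite inE => zq'; rewrite tzq //.
have [zx|] := eqVneq z x; last by rewrite mulr0.
have [qy|] := eqVneq q y; last by rewrite mulr0.
by move: not_qy_px; rewrite qy eqxx -zx pz.
Qed.

Lemma transvection_comm x y z : (x < y)%O -> (y < z)%O ->
  imul (imul (transvection y z) (transvection x y)) (transvection x z) =
  imul (transvection x y) (transvection y z).
Proof.
move=> xy yz; have xz := lt_trans xy yz.
rewrite (imul_transvection xz (imul_le_supported _ _)).
rewrite (imul_transvection xy (U1_le_supported (U1_transvection yz))).
rewrite (imul_transvection yz (U1_le_supported (U1_transvection xy))).
have := (lt_eqF xy, gt_eqF xy, lt_eqF yz, gt_eqF yz, lt_eqF xz, gt_eqF xz).
move=> [[[[[e1 e2] e3] e4] e5] e6].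
apply/funext => p; apply/funext => q; rewrite /transvection /idelta.
have cases w : [\/ w = x, w = y, w = z | [&& w != x, w != y & w != z]].
  have [|wx] := eqVneq w x; first by constructor 1.
  have [|wy] := eqVneq w y; first by constructor 2.
  have [|wz] := eqVneq w z; first by constructor 3.
  by constructor 4; apply/and3P.
case: (cases p) => [->|->|->|/and3P[px py pz]];
case: (cases q) => [->|->|->|/and3P[qx qy qz]];
rewrite ?eqxx ?e1 ?e2 ?e3 ?e4 ?e5 ?e6 ?(negbTE px) ?(negbTE qx) ?(negbTE py)
  ?(negbTE qy) ?(negbTE pz) ?(negbTE qz) /= ?(addr0, add0r) //.
Qed.

End IncidenceAlgebra.

Arguments U1_delta {d X K}.
Arguments U1_group {d X K}.

Section Chains.
Variables (d : Order.disp_t) (X : porderType d).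

Inductive lchain : nat -> X -> X -> Prop :=
| lchain0 x : lchain 0 x x
| lchainS k x z y : (x < z)%O -> lchain k z y -> lchain k.+1 x y.

Lemma lchain_le k x y : lchain k x y -> (x <= y)%O.
Proof. by elim=> // {}k {}x z {}y /ltW xz _; apply: le_trans. Qed.

Lemma lchain_lt k x y : lchain k x y -> (0 < k)%N -> (x < y)%O.
Proof. by case=> // {}k {}x z {}y xz /lchain_le zy _; apply: lt_le_trans zy. Qed.

Lemma lchain1 x y : (x < y)%O -> lchain 1 x y.
Proof. by move=> xy; apply: lchainS xy (lchain0 _). Qed.

Lemma lchain_cat i j x z y : lchain i x z -> lchain j z y -> lchain (i + j) x y.
Proof. by elim=> // i' x' w z' xw _ IH /IH; apply: lchainS. Qed.

Lemma lchainSP k x y : lchain k.+1 x y -> exists2 z, (x < z)%O & lchain k z y.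
Proof. by move E: k.+1 => n c; case: c E => // n' {}x z {}y xz c [->]; exists z. Qed.

Lemma lchain_split i j x y : lchain (i + j) x y -> exists2 z, lchain i x z & lchain j z y.
Proof.
elim: i x => [|i IH] x; first by exists x => //; exact: lchain0.
by rewrite addSn => /lchainSP [z xz /IH [w zw wy]]; exists w => //; apply: lchainS xz zw.
Qed.

Lemma chain_lchain x s : chain (x :: s) -> lchain (size s) x (last x s).
Proof.
elim: s x => [|z s IH] x /=; first by move=> _; exact: lchain0.
by case/andP=> xz zs; apply: lchainS xz (IH z zs).
Qed.

Lemma lchain_chain k x y : lchain k x y -> exists s, chain (x :: s) /\ size s = k.
Proof.
elim=> [w|{}k {}x z {}y xz _ [s [zs sk]]]; first by exists [::].
by exists (z :: s); rewrite /chain /= xz -sk.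
Qed.

Lemma length_lchain_bound N : (forall s : seq X, chain s -> (size s <= N.+1)%N) ->
  forall k x y, lchain k x y -> (k <= N)%N.
Proof. by move=> sizeN k x y /lchain_chain [s [xs <-]]; apply: sizeN xs. Qed.

Lemma unbounded_chain n : ~ bounded X -> exists s : seq X, chain s /\ (n < size s)%N.
Proof.
move=> unbounded; apply: contrapT => short; apply: unbounded; exists n => s cs.
by rewrite leqNgt; apply/negP => ns; apply: short; exists s.
Qed.

Lemma length_lchain L : length_eq X L -> exists x y : X, lchain L x y.
Proof.
move=> [[[|x s] [cs sL]] _] //; case: sL => <-.
by exists x, (last x s); exact: chain_lchain.
Qed.

Definition chain_ge m x y := exists2 k, (m <= k)%N & lchain k x y.

Lemma chain_ge_cat i j x z y : chain_ge i x z -> chain_ge j z y -> chain_ge (i + j) x y.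
Proof.
by move=> [k ik c] [k' jk' c']; exists (k + k')%N; [apply: leq_add | apply: lchain_cat c c'].
Qed.

Lemma chain_geW m n x y : (m <= n)%N -> chain_ge n x y -> chain_ge m x y.
Proof. by move=> mn [k nk c]; exists k => //; apply: leq_trans nk. Qed.

Lemma chain_ge1 x y : (x < y)%O -> chain_ge 1 x y.
Proof. by move=> /lchain1; exists 1%N. Qed.

Lemma chain_ge_ltl m x z y : (x < z)%O -> chain_ge m z y -> chain_ge m x y.
Proof. by move=> /chain_ge1 xz /(chain_ge_cat xz); apply: chain_geW; rewrite leq_addl. Qed.

Lemma chain_ge_ltr m x z y : chain_ge m x z -> (z < y)%O -> chain_ge m x y.
Proof. by move=> xz /chain_ge1 /(chain_ge_cat xz); apply: chain_geW; rewrite leq_addr. Qed.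

End Chains.

Section Filtration.
Variables (d : Order.disp_t) (X : porderType d) (K : fieldType).
Local Notation ialg := (ialg X K).
Local Notation imul := (@imul d X K).
Local Notation delta := (@idelta d X K).
Local Notation U1 := (@U1 d X K).
Local Notation chain_ge := (@chain_ge d X).
Local Notation lcs := (lcs imul delta U1).
Local Notation derived := (derived imul delta U1).

Definition U1_filt (m : nat) : set ialg :=
  [set a | U1 a /\ forall x y, x != y -> ~ chain_ge m x y -> a x y = 0].

Lemma U1_filtP m a : U1 a ->
  (forall x y, (x < y)%O -> ~ chain_ge m x y -> a x y = 0) -> U1_filt m a.
Proof.
move=> Ua a0; split=> // x y xy nxy; have [le_xy|nle_xy] := boolP (x <= y)%O.
  by apply: a0 => //; rewrite lt_neqAle xy.
exact: U1_le_supported.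
Qed.

Lemma U1_filt_chain_ge m a x y : U1_filt m a -> x != y -> a x y != 0 -> chain_ge m x y.
Proof. by move=> [_ a0] xy /eqP nz; apply: contrapT => /(a0 _ _ xy). Qed.

Lemma imul_U1_filt_l m a b x y : U1_filt m a -> U1 b -> (x < y)%O ->
  ~ chain_ge m x y -> imul a b x y = b x y.
Proof.
move=> fa Ub xy nxy; have [Ua a0] := fa.
rewrite imul_lt // ?Ua.2 ?Ub.2 ?a0 ?(negbT (lt_eqF xy)) ?mul1r ?mul0r ?addr0 //.
move=> z xz zy; rewrite a0 ?mul0r ?(negbT (lt_eqF xz)) //.
by move=> /chain_ge_ltr /(_ zy).
Qed.

Lemma imul_U1_filt i j a b x y : U1_filt i a -> U1_filt j b -> (x < y)%O ->
  ~ chain_ge (i + j) x y -> imul a b x y = a x y + b x y.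
Proof.
move=> fa fb xy nxy; rewrite imul_lt // ?fa.1.2 ?fb.1.2 ?mul1r ?mulr1 1?addrC //.
move=> z xz zy; have [->|az] := eqVneq (a x z) 0; first by rewrite mul0r.
have [->|bz] := eqVneq (b z y) 0; first by rewrite mulr0.
by case: nxy; apply: chain_ge_cat (U1_filt_chain_ge fa (negbT (lt_eqF xz)) az)
                                   (U1_filt_chain_ge fb (negbT (lt_eqF zy)) bz).
Qed.

Lemma U1_filt_group m : is_subgroup imul delta U1 (U1_filt m).
Proof.
split=> [a [] //||a b fa fb|a b fa Ub ab].
- by apply: U1_filtP U1_delta _ => x y xy _; rewrite /idelta (lt_eqF xy).
- apply: U1_filtP (U1_imul fa.1 fb.1) _ => x y xy nxy.
  by rewrite (imul_U1_filt_l fa fb.1) //; apply: fb.2 (negbT (lt_eqF xy)) nxy.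
apply: (U1_filtP Ub) => x y xy nxy.
by rewrite -(imul_U1_filt_l fa Ub xy nxy) ab /idelta (lt_eqF xy).
Qed.

Lemma U1_filt1 : U1 `<=` U1_filt 1.
Proof. by move=> a Ua; apply: U1_filtP => // x y /chain_ge1. Qed.

Section BoundedChains.
Variable B : nat.
Hypothesis chain_bound : forall k x y, @lchain d X k x y -> (k <= B)%N.

Lemma U1_filt_trivial m : (B < m)%N -> U1_filt m `<=` [set delta].
Proof.
move=> Bm a [Ua a0]; apply/funext => x; apply/funext => y.
rewrite /idelta; have [->|xy] := eqVneq x y; first exact: Ua.2.
apply: a0 => // -[k mk /chain_bound kB].
by move: (leq_ltn_trans kB (leq_trans Bm mk)); rewrite ltnn.
Qed.

(* Induction on the longest chain from x to y, using ((b a) c)_xy = c_xy + (b a)_xy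
   once the entries c_zy with x < z < y are known to vanish. *)
Lemma comm_U1_filt i j :
  comm_set imul U1 (U1_filt i) (U1_filt j) `<=` U1_filt (i + j).
Proof.
move=> c [Uc [a [b [fa fb bac]]]].
suff c0 n x y : (forall k, lchain k x y -> (k <= n)%N) -> (x < y)%O ->
    ~ chain_ge (i + j) x y -> c x y = 0.
  by apply: U1_filtP => // x y; apply: c0 => k; apply: chain_bound.
elim: n x y => [|n IH] x y bound xy nxy; first by have := bound _ (lchain1 xy).
have /= := congr1 (fun f => f x y) bac.
rewrite (imul_U1_filt fa fb) // imul_lt //; last first.
  move=> z xz zy; rewrite (IH z y) ?mulr0 // => [k /(lchainS xz) /bound //|].
  by move=> /(chain_ge_ltl xz).
rewrite imul_diag (imul_U1_filt fb fa) 1?addnC // fa.1.2 fb.1.2 Uc.2 !mul1r mulr1.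
by rewrite [b x y + _]addrC -{2}[a x y + b x y]add0r => /addIr.
Qed.

Lemma lcs_filt n : lcs n `<=` U1_filt n.+1.
Proof.
elim: n => [|n IH] /=; first exact: U1_filt1.
apply: gen_sub (U1_filt_group _) _; rewrite -addn1.
by apply: (subset_trans _ (@comm_U1_filt _ _)); apply: comm_setS IH U1_filt1.
Qed.

Lemma derived_filt n : derived n `<=` U1_filt (2 ^ n).
Proof.
elim: n => [|n IH] /=; first exact: U1_filt1.
apply: gen_sub (U1_filt_group _) _; rewrite expnS mul2n -addnn.
by apply: (subset_trans _ (@comm_U1_filt _ _)); apply: (comm_setS IH IH).
Qed.

Lemma lcs_bound : lcs B = [set delta].
Proof.
apply: (lcs_eq1 U1_group); apply: subset_trans (@lcs_filt B) _.
exact: U1_filt_trivial.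
Qed.

Lemma derived_bound n : (B < 2 ^ n)%N -> derived n = [set delta].
Proof.
move=> Bn; apply: (derived_eq1 U1_group); apply: subset_trans (@derived_filt n) _.
exact: U1_filt_trivial.
Qed.

End BoundedChains.
End Filtration.

Section LowerBounds.
Variables (d : Order.disp_t) (X : porderType d) (K : fieldType).
Local Notation ialg := (ialg X K).
Local Notation imul := (@imul d X K).
Local Notation delta := (@idelta d X K).
Local Notation U1 := (@U1 d X K).
Local Notation tv := (@transvection d X K).
Local Notation lcs := (lcs imul delta U1).
Local Notation derived := (derived imul delta U1).

Lemma gen_comm_transvection (A B : set ialg) x y z : (x < y)%O -> (y < z)%O ->
  A (tv x y) -> B (tv y z) -> gen imul delta U1 (comm_set imul U1 A B) (tv x z).
Proof.
move=> xy yz Axy Byz; apply: sub_gen; split; first exact: U1_transvection (lt_trans xy yz).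
by exists (tv x y), (tv y z); split=> //; apply: transvection_comm.
Qed.

Lemma lcs_transvection k m x y : lchain m x y -> (k < m)%N -> lcs k (tv x y).
Proof.
elim: k m x y => [|k IH] [|m] x y // c km; first exact/U1_transvection/(lchain_lt c).
move: c; rewrite -addn1 => /lchain_split [w xw wy].
apply: (gen_comm_transvection (lchain_lt xw _) (lchain_lt wy _)) => //.
- exact: leq_ltn_trans (leq0n k) km.
- exact: IH xw km.
- exact/U1_transvection/(lchain_lt wy).
Qed.

Lemma derived_transvection n m x y : lchain m x y -> (2 ^ n <= m)%N -> derived n (tv x y).
Proof.
have pos k : (0 < 2 ^ k)%N by rewrite expn_gt0.
elim: n m x y => [|n IH] m x y c nm; first exact/U1_transvection/(lchain_lt c).
have halves : (2 ^ n + 2 ^ n <= m)%N by rewrite addnn -mul2n -expnS.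
have le_nm : (2 ^ n <= m)%N := leq_trans (leq_addr _ _) halves.
have nm' : (2 ^ n <= m - 2 ^ n)%N by rewrite leq_subRL.
move: c; rewrite -(subnKC le_nm).
move=> /lchain_split [w xw wy].
apply: (gen_comm_transvection (lchain_lt xw (pos n)) (lchain_lt wy (leq_trans (pos n) nm'))).
- exact: IH xw (leqnn _).
- exact: IH wy nm'.
Qed.

Lemma lcs_neq1 k m (x y : X) : lchain m x y -> (k < m)%N -> lcs k <> [set delta].
Proof.
move=> c km lcs1; have := lcs_transvection c km; rewrite lcs1.
exact/transvection_neq_delta/(lchain_lt c)/(leq_ltn_trans (leq0n k) km).
Qed.

Lemma derived_neq1 n m (x y : X) : lchain m x y -> (2 ^ n <= m)%N -> derived n <> [set delta].
Proof.
move=> c nm der1; have := derived_transvection c nm; rewrite der1.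
by apply/transvection_neq_delta/(lchain_lt c)/(leq_trans _ nm); rewrite expn_gt0.
Qed.

End LowerBounds.

Section UnitriangularGroup.
Variables (d : Order.disp_t) (X : porderType d) (K : fieldType).
Local Notation imul := (@imul d X K).
Local Notation delta := (@idelta d X K).
Local Notation U1 := (@U1 d X K).

Lemma solvable_bounded : grp_solvable imul delta U1 -> bounded X.
Proof.
move=> [n der1]; apply: contrapT => /(unbounded_chain (2 ^ n)) [[|x s] [cs]] //=.
by rewrite ltnS => ns; apply: derived_neq1 (chain_lchain cs) ns der1.
Qed.

Lemma bounded_nilpotent : bounded X -> grp_nilpotent imul delta U1.
Proof.
move=> [N sizeN]; exists N; apply: lcs_bound.
by apply: length_lchain_bound => s /sizeN /leqW.
Qed.

Lemma nil_class_length L : length_eq X L -> nil_class imul delta U1 L.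
Proof.
move=> lenL; have [x [y c]] := length_lchain lenL.
split; first exact/lcs_bound/length_lchain_bound/lenL.2.
by move=> k lcs1; rewrite leqNgt; apply/negP => kL; apply: lcs_neq1 c kL lcs1.
Qed.

Lemma derived_length_length L :
  length_eq X L -> derived_length imul delta U1 (up_log 2 L.+1).
Proof.
move=> lenL; have [x [y c]] := length_lchain lenL.
split; first by apply: (derived_bound K (length_lchain_bound lenL.2)); exact: up_logP.
move=> k der1; apply: up_log_min => //; rewrite leqNgt; apply/negP => kL.
exact: derived_neq1 c kL der1.
Qed.

End UnitriangularGroup.

Theorem corollary1p7 (d : Order.disp_t) (X : porderType d) (K : fieldType) :
  (grp_solvable (@imul d X K) (@idelta d X K) (@U1 d X K) <->
     grp_nilpotent (@imul d X K) (@idelta d X K) (@U1 d X K)) /\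
  (grp_nilpotent (@imul d X K) (@idelta d X K) (@U1 d X K) <-> @bounded d X) /\
  (forall L : nat, @length_eq d X L ->
     nil_class (@imul d X K) (@idelta d X K) (@U1 d X K) L /\
     derived_length (@imul d X K) (@idelta d X K) (@U1 d X K) (up_log 2 L.+1)).
Proof.
have nil_solv := nilpotent_solvable (@U1_group d X K).
have solv_bnd := @solvable_bounded d X K.
have bnd_nil := @bounded_nilpotent d X K.
split; first by split=> [/solv_bnd/bnd_nil | /nil_solv].
split; first by split=> [/nil_solv/solv_bnd | /bnd_nil].
by move=> L lenL; split; [exact: nil_class_length | exact: derived_length_length].
Qed.
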